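(* Let $R>0$ and let $(m,n)$, $(m',n')$ be integer points on the ellipse $X^2+XY+Y^2=R^2$ with $1\le m<m'\le n'<n$. Then $F_R(m,n)>F_R(m',n')$, and, as $R\to\infty$, $$F_R(m,n)-F_R(m',n')\gg\frac1{m^4},$$ with an absolute implied constant.
   Context: For integers $m,n\ge1$ with $m^2+mn+n^2=R^2$, $F_R(m,n)=\frac{R^4}{m^2n^2(m+n)^2}=\frac1{m^2}+\frac1{n^2}+\frac1{(m+n)^2}$. *)

From Stdlib Require Import Reals.
Open Scope R_scope.

Definition on_ellipse (Rad : R) (m n : nat) : Prop :=
  INR m ^ 2 + INR m * INR n + INR n ^ 2 = Rad ^ 2.

Definition F (Rad : R) (m n : nat) : R :=
  Rad ^ 4 / (INR m ^ 2 * INR n ^ 2 * (INR m + INR n) ^ 2).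

(* With s = m + n, the ellipse equation gives m n = s^2 - R^2 and n s = R^2 - m^2, so the
   product P = m n (m + n) equals both s (s^2 - R^2) and m (R^2 - m^2), while F_R = R^4 / P^2.
   Along the arc m < n the sum s strictly increases as m does, and being an integer it grows by
   at least 1; since s >= R, the cubic s (s^2 - R^2) then grows by at least 2 R^2.  Hence
   P' >= P + 2 R^2 with P <= m R^2, which makes R^4/P^2 - R^4/P'^2 at least 4 / (9 m^4) for every R. *)

From Stdlib Require Import Reals Lra Lia.
Open Scope R_scope.

Section EllipseArc.

Variables (q a b : R).
Hypothesis ellipse : a ^ 2 + a * b + b ^ 2 = q.

Lemma ellipse_prod_cubic : a * b * (a + b) = (a + b) * ((a + b) ^ 2 - q).
Proof. rewrite <- ellipse; ring. Qed.

Lemma ellipse_prod_le : 0 <= a -> a * b * (a + b) <= a * q.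
Proof. intros a_ge0; rewrite <- ellipse; nra. Qed.

Lemma ellipse_sum_sq_ge : 0 <= a -> 0 <= b -> q <= (a + b) ^ 2.
Proof. intros; rewrite <- ellipse; nra. Qed.

End EllipseArc.

(* [3 (a+b)^2 + (b-a)^2 = 4 q] : the sum grows as the points move towards the diagonal. *)
Lemma ellipse_sum_lt (q a b a' b' : R) :
  0 <= a -> a < a' -> a' <= b' -> b' < b ->
  a ^ 2 + a * b + b ^ 2 = q -> a' ^ 2 + a' * b' + b' ^ 2 = q ->
  a + b < a' + b'.
Proof.
  intros a_ge0 aa' a'b' b'b e e'.
  assert (gap : (b' - a') ^ 2 < (b - a) ^ 2) by nra.
  nra.
Qed.

Lemma cubic_increment (q s s' : R) :
  0 <= s -> q <= s ^ 2 -> s + 1 <= s' ->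
  s * (s ^ 2 - q) + 2 * q <= s' * (s' ^ 2 - q).
Proof.
  intros s_ge0 q_le step.
  assert (factor : s' * (s' ^ 2 - q) - s * (s ^ 2 - q)
                   = (s' - s) * (s' ^ 2 + s' * s + s ^ 2 - q)) by ring.
  assert (second : 2 * q <= s' ^ 2 + s' * s + s ^ 2 - q) by nra.
  assert (second_ge0 : 0 <= s' ^ 2 + s' * s + s ^ 2 - q) by nra.
  nra.
Qed.

Lemma inv_sq_gap (q a P P' : R) :
  0 < q -> 1 <= a -> 0 < P -> P <= a * q -> P + 2 * q <= P' ->
  q ^ 2 / P ^ 2 - q ^ 2 / P' ^ 2 >= 4 / (9 * a ^ 4).
Proof.
  intros q_gt0 a_ge1 P_gt0 P_le step.
  assert (far : q ^ 2 / P' ^ 2 <= q ^ 2 / (P + 2 * q) ^ 2).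
  { unfold Rdiv; apply Rmult_le_compat_l; [nra|].
    apply Rinv_le_contravar; [nra|]. apply pow_incr; lra. }
  assert (near : q ^ 2 / P ^ 2 - q ^ 2 / (P + 2 * q) ^ 2
                 = 4 * q ^ 3 * (P + q) / (P ^ 2 * (P + 2 * q) ^ 2)) by (field; lra).
  assert (bound : 4 / (9 * a ^ 4) <= 4 * q ^ 3 * (P + q) / (P ^ 2 * (P + 2 * q) ^ 2)).
  { assert (den_le : P ^ 2 * (P + 2 * q) ^ 2 <= 9 * a ^ 4 * q ^ 4).
    { assert (P + 2 * q <= 3 * a * q) by nra.
      replace (9 * a ^ 4 * q ^ 4) with ((a * q) ^ 2 * (3 * a * q) ^ 2) by ring.
      apply Rmult_le_compat; try (apply pow_le; lra); apply pow_incr; lra. }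
    assert (den_gt0 : 0 < P ^ 2 * (P + 2 * q) ^ 2) by (apply Rmult_lt_0_compat; nra).
    assert (a_gt0 : 0 < a ^ 4) by (apply pow_lt; lra).
    replace (4 / (9 * a ^ 4)) with (4 * q ^ 4 / (9 * a ^ 4 * q ^ 4)) by (field; nra).
    unfold Rdiv; apply Rle_trans with (4 * q ^ 4 * / (P ^ 2 * (P + 2 * q) ^ 2)).
    - apply Rmult_le_compat_l; [nra|]. apply Rinv_le_contravar; assumption.
    - apply Rmult_le_compat_r; [left; apply Rinv_0_lt_compat; assumption|]. nra. }
  lra.
Qed.

Lemma F_eq_prod (Rad : R) (m n : nat) :
  F Rad m n = (Rad ^ 2) ^ 2 / (INR m * INR n * (INR m + INR n)) ^ 2.
Proof. unfold F; f_equal; ring. Qed.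

Lemma on_ellipse_prod_gap (Rad : R) (m n m' n' : nat) :
  on_ellipse Rad m n -> on_ellipse Rad m' n' ->
  (1 <= m)%nat -> (m < m')%nat -> (m' <= n')%nat -> (n' < n)%nat ->
  let P := INR m * INR n * (INR m + INR n) in
  let P' := INR m' * INR n' * (INR m' + INR n') in
  0 < Rad ^ 2 /\ 0 < P /\ P <= INR m * Rad ^ 2 /\ P + 2 * Rad ^ 2 <= P'.
Proof.
  intros e e' m_ge1 mm' m'n' n'n P P'; unfold on_ellipse in e, e'.
  assert (m_pos : 1 <= INR m) by (apply (le_INR 1); lia).
  assert (n_pos : 1 <= INR n) by (apply (le_INR 1); lia).
  assert (n'_ge0 := pos_INR n').
  assert (sum_lt : INR m + INR n < INR m' + INR n').
  { apply (ellipse_sum_lt (Rad ^ 2)); try assumption; try lra;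
      apply lt_INR || apply le_INR; lia. }
  assert (sum_step : INR m + INR n + 1 <= INR m' + INR n').
  { rewrite <- !plus_INR in sum_lt |- *; rewrite <- S_INR; apply le_INR.
    apply INR_lt in sum_lt; lia. }
  assert (P_cubic := ellipse_prod_cubic _ _ _ e).
  assert (P'_cubic := ellipse_prod_cubic _ _ _ e').
  assert (q_le := ellipse_sum_sq_ge _ _ _ e ltac:(lra) ltac:(lra)).
  repeat split.
  - rewrite <- e; nra.
  - unfold P; apply Rmult_lt_0_compat; nra.
  - apply ellipse_prod_le; [exact e | lra].
  - unfold P, P'; rewrite P_cubic, P'_cubic.
    apply cubic_increment; lra.
Qed.

Lemma F_sub_ge (Rad : R) (m n m' n' : nat) :
  on_ellipse Rad m n -> on_ellipse Rad m' n' ->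
  (1 <= m)%nat -> (m < m')%nat -> (m' <= n')%nat -> (n' < n)%nat ->
  F Rad m n - F Rad m' n' >= 4 / 9 / INR m ^ 4.
Proof.
  intros e e' m_ge1 mm' m'n' n'n.
  destruct (on_ellipse_prod_gap Rad m n m' n' e e' m_ge1 mm' m'n' n'n)
    as (q_gt0 & P_gt0 & P_le & step).
  assert (m_ge1' : 1 <= INR m) by (apply (le_INR 1); lia).
  replace (4 / 9 / INR m ^ 4) with (4 / (9 * INR m ^ 4)) by (field; lra).
  rewrite !F_eq_prod; apply inv_sq_gap; assumption.
Qed.

Theorem proposition7p2 :
  (forall (Rad : R) (m n m' n' : nat),
      0 < Rad -> on_ellipse Rad m n -> on_ellipse Rad m' n' ->
      (1 <= m)%nat -> (m < m')%nat -> (m' <= n')%nat -> (n' < n)%nat ->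
      F Rad m n > F Rad m' n')
  /\
  (exists c : R, 0 < c /\ exists R0 : R, forall (Rad : R) (m n m' n' : nat),
      R0 <= Rad -> on_ellipse Rad m n -> on_ellipse Rad m' n' ->
      (1 <= m)%nat -> (m < m')%nat -> (m' <= n')%nat -> (n' < n)%nat ->
      F Rad m n - F Rad m' n' >= c / INR m ^ 4).
Proof.
  split.
  - intros Rad m n m' n' _ e e' m_ge1 mm' m'n' n'n.
    assert (1 <= INR m) by (apply (le_INR 1); lia).
    assert (0 < 4 / 9 / INR m ^ 4) by (apply Rdiv_lt_0_compat; [lra | apply pow_lt; lra]).
    pose proof (F_sub_ge Rad m n m' n' e e' m_ge1 mm' m'n' n'n); lra.
  - exists (4 / 9); split; [lra|]. exists 0.
    intros Rad m n m' n' _; apply F_sub_ge.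
Qed.
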